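(* Let $A$ be an infinitesimal Hopf algebra with counit $\varepsilon$ and antipode $S$. Then: (1) For all $a,b\in A$, $S(ab)=\varepsilon(a)S(b)+\varepsilon(b)S(a)-\varepsilon(a)\varepsilon(b)1$. In particular $S(ab)=0$ whenever $\varepsilon(a)=\varepsilon(b)=0$. (2) For all $a\in A$, $\Delta(S(a))=S(a)\otimes 1+1\otimes S(a)-\varepsilon(a)1\otimes 1$. In particular, if $\varepsilon(a)=0$ then $S(a)$ is primitive, i.e. $\Delta(S(a))=S(a)\otimes 1+1\otimes S(a)$.
   Context: An infinitesimal bialgebra over a field $K$ is a $K$-vector space $A$ that is an associative unital algebra (product $m$, unit $1$) and a coassociative counital coalgebra (coproduct $\Delta$, counit $\varepsilon$) such that for all $a,b\in A$: $\Delta(ab)=\Delta(a)(1\otimes b)+(a\otimes 1)\Delta(b)-a\otimes b$. On the space $\mathcal{L}(A)$ of linear endomorphisms of $A$, the convolution product is $f\star g=m\circ(f\otimes g)\circ\Delta$, with unit $\nu\circ\varepsilon$, where $\nu(\lambda)=\lambda 1$. $A$ is an infinitesimal Hopf algebra if $\mathrm{Id}_A$ has an inverse $S$ for $\star$; $S$ is called the antipode. *)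

From HB Require Import structures.
From mathcomp Require Import all_boot all_order all_algebra.
Set Implicit Arguments. Unset Strict Implicit. Unset Printing Implicit Defensive.
Import GRing.Theory.
Local Open Scope ring_scope.

(* Elements of A (x) A (resp. A (x) A (x) A) are represented by finite formal
   sums of pure tensors, i.e. lists of pairs (resp. triples).  Two such formal
   sums denote the same tensor iff they agree under every bilinear
   (resp. trilinear) map into every K-vector space (universal property of the
   tensor product). *)

Section Tensors.
Variables (K : fieldType) (A : lmodType K).

Definition bilin (V : lmodType K) (B : A -> A -> V) : Prop :=
  (forall c x y z, B (c *: x + y) z = c *: B x z + B y z) /\
  (forall c x y z, B z (c *: x + y) = c *: B z x + B z y).

Definition trilin (V : lmodType K) (B : A -> A -> A -> V) : Prop :=
  (forall c x y z w, B (c *: x + y) z w = c *: B x z w + B y z w) /\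
  (forall c x y z w, B z (c *: x + y) w = c *: B z x w + B z y w) /\
  (forall c x y z w, B z w (c *: x + y) = c *: B z w x + B z w y).

Definition teq2 (s t : seq (A * A)) : Prop :=
  forall (V : lmodType K) (B : A -> A -> V), bilin B ->
    \sum_(p <- s) B p.1 p.2 = \sum_(p <- t) B p.1 p.2.

Definition teq3 (s t : seq (A * A * A)) : Prop :=
  forall (V : lmodType K) (B : A -> A -> A -> V), trilin B ->
    \sum_(p <- s) B p.1.1 p.1.2 p.2 = \sum_(p <- t) B p.1.1 p.1.2 p.2.

End Tensors.

Section InfHopf.
Variables (K : fieldType) (A : algType K).
Variable (Delta : A -> seq (A * A)) (eps : {scalar A}).

Definition coprod_linear : Prop :=
  forall (c : K) (x y : A),
    teq2 (Delta (c *: x + y)) ([seq (c *: p.1, p.2) | p <- Delta x] ++ Delta y).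

Definition coassociative : Prop :=
  forall a : A,
    teq3 (flatten [seq [seq (q.1, q.2, p.2) | q <- Delta p.1] | p <- Delta a])
         (flatten [seq [seq (p.1, q.1, q.2) | q <- Delta p.2] | p <- Delta a]).

Definition counital : Prop :=
  forall a : A,
    \sum_(p <- Delta a) eps p.1 *: p.2 = a /\
    \sum_(p <- Delta a) eps p.2 *: p.1 = a.

Definition infinitesimal_compat : Prop :=
  forall a b : A,
    teq2 (Delta (a * b))
         ([seq (p.1, p.2 * b) | p <- Delta a] ++
          [seq (a * p.1, p.2) | p <- Delta b] ++ [:: (- a, b)]).

Definition inf_bialgebra : Prop :=
  [/\ coprod_linear, coassociative, counital & infinitesimal_compat].

Definition conv (f g : A -> A) (a : A) : A :=
  \sum_(p <- Delta a) f p.1 * g p.2.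

Definition is_antipode (S : A -> A) : Prop :=
  forall a : A, conv S id a = eps a *: 1 /\ conv id S a = eps a *: 1.

Definition primitive (x : A) : Prop :=
  teq2 (Delta x) [:: (x, 1); (1, x)].

End InfHopf.

From HB Require Import structures.
From mathcomp Require Import all_boot all_order all_algebra.
Set Implicit Arguments. Unset Strict Implicit. Unset Printing Implicit Defensive.
Import GRing.Theory.
Local Open Scope ring_scope.

(* Tensors are only observed through bilinear maps B, so Δ x is handled as the
   Sweedler sum Σ B(x₁, x₂), and every step below is an identity of such sums.
   Both parts insert the antipode identities Σ S(a₁)a₂ = ε(a)1 = Σ a₁S(a₂) and
   use coassociativity to move them to where they can be contracted.
   (1) S(ab) = Σ S(a₁)a₂S(a₃b), and the compatibility rule evaluates the inner
   Σ c₁S(c₂b) as ε(c)ε(b)1 - ε(b)c + cS(b).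
   (2) S(a) = Σ S(a₁)a₂S(a₃); applying the compatibility rule twice splits
   Δ(xyz) into five terms, which contract to
   Δ(Sa) = Δ(Sa) + ε(a)1⊗1 + Δ(Sa) - Sa⊗1 - 1⊗Sa. *)

Section Bilinear.
Variables (K : fieldType) (A V : lmodType K).

Definition pack_linear (f : A -> V)
    (hf : forall c x y, f (c *: x + y) = c *: f x + f y) : {linear A -> V} :=
  HB.pack f (GRing.isLinear.Build K A V *:%R f hf).

Variables (B : A -> A -> V) (hB : bilin B).

Let linl z : {linear A -> V} := pack_linear (fun c x y => proj1 hB c x y z).
Let linr z : {linear A -> V} := pack_linear (fun c x y => proj2 hB c x y z).

Lemma bilin_suml I (r : seq I) (F : I -> A) z :
  B (\sum_(i <- r) F i) z = \sum_(i <- r) B (F i) z.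
Proof. exact: (linear_sum (linl z)). Qed.

Lemma bilin_sumr I (r : seq I) (F : I -> A) z :
  B z (\sum_(i <- r) F i) = \sum_(i <- r) B z (F i).
Proof. exact: (linear_sum (linr z)). Qed.

Lemma bilinZl c x z : B (c *: x) z = c *: B x z.
Proof. exact: (linearZ_LR (linl z)). Qed.

Lemma bilinZr c x z : B z (c *: x) = c *: B z x.
Proof. exact: (linearZ_LR (linr z)). Qed.

Lemma bilinNl x z : B (- x) z = - B x z.
Proof. exact: (linearN (linl z)). Qed.

Lemma bilin_swap : bilin (fun x y => B y x).
Proof. by case: hB. Qed.

Lemma bilin_linear (f g : {linear A -> A}) : bilin (fun x y => B (f x) (g y)).
Proof. by case: hB => Bl Br; split=> c x y z; rewrite linearP /= ?Bl ?Br. Qed.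

End Bilinear.

Lemma trilin_bilin (K : fieldType) (A V : lmodType K) (T : A -> A -> A -> V) w :
  trilin T -> bilin (T w).
Proof. by case=> _ [T2 T3]; split=> *; [apply: T2 | apply: T3]. Qed.

Section AlgebraBilinear.
Variables (K : fieldType) (A : algType K) (V : lmodType K).

Lemma bilin_mul : bilin ( *%R : A -> A -> A).
Proof. by split=> c x y z; rewrite ?mulrDl ?mulrDr -?scalerAl -?scalerAr. Qed.

Variables (B : A -> A -> V) (hB : bilin B).

Lemma trilin_mull : trilin (fun w u v => B (w * u) v).
Proof.
case: hB => Bl Br; split; [|split] => c x y z w.
- by rewrite mulrDl -scalerAl Bl.
- by rewrite mulrDr -scalerAr Bl.
- by rewrite Br.
Qed.

Lemma trilin_mulr : trilin (fun w u v => B u (v * w)).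
Proof.
case: hB => Bl Br; split; [|split] => c x y z w.
- by rewrite mulrDr -scalerAr Br.
- by rewrite Bl.
- by rewrite mulrDl -scalerAl Br.
Qed.

Lemma bilin_mulr w : bilin (fun u v => B u (v * w)).
Proof. exact: (trilin_bilin w trilin_mulr). Qed.

End AlgebraBilinear.

Arguments bilin_mul {K A}.

Section Sweedler.
Variables (K : fieldType) (A : algType K) (Delta : A -> seq (A * A)).

Definition sweedler (V : lmodType K) (B : A -> A -> V) (a : A) : V :=
  \sum_(p <- Delta a) B p.1 p.2.

Definition sweedler3 (V : lmodType K) (T : A -> A -> A -> V) (a : A) : V :=
  sweedler (fun x z => sweedler (fun u v => T u v z) x) a.

Variable V : lmodType K.

Lemma sweedlerE (B : A -> A -> V) a : sweedler B a = \sum_(p <- Delta a) B p.1 p.2.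
Proof. by []. Qed.

Lemma sweedler3E (T : A -> A -> A -> V) a :
  sweedler3 T a = sweedler (fun x z => sweedler (fun u v => T u v z) x) a.
Proof. by []. Qed.

Lemma eq_sweedler (B B' : A -> A -> V) a :
  (forall x y, B x y = B' x y) -> sweedler B a = sweedler B' a.
Proof. by move=> eqB; apply: eq_bigr => p _; apply: eqB. Qed.

Lemma eq_sweedler3 (T T' : A -> A -> A -> V) a :
  (forall x y z, T x y z = T' x y z) -> sweedler3 T a = sweedler3 T' a.
Proof. by move=> eqT; do 2!apply: eq_sweedler => ? ?. Qed.

Lemma sweedlerD (B B' : A -> A -> V) a :
  sweedler (fun x y => B x y + B' x y) a = sweedler B a + sweedler B' a.
Proof. exact: big_split. Qed.

Lemma sweedlerB (B B' : A -> A -> V) a :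
  sweedler (fun x y => B x y - B' x y) a = sweedler B a - sweedler B' a.
Proof. exact: sumrB. Qed.

Lemma scaler_sweedler c (B : A -> A -> V) a :
  c *: sweedler B a = sweedler (fun x y => c *: B x y) a.
Proof. exact: scaler_sumr. Qed.

Lemma sweedler3D (T T' : A -> A -> A -> V) a :
  sweedler3 (fun x y z => T x y z + T' x y z) a = sweedler3 T a + sweedler3 T' a.
Proof.
by rewrite /sweedler3 -sweedlerD; apply: eq_sweedler => x z; rewrite sweedlerD.
Qed.

Lemma sweedler3B (T T' : A -> A -> A -> V) a :
  sweedler3 (fun x y z => T x y z - T' x y z) a = sweedler3 T a - sweedler3 T' a.
Proof.
by rewrite /sweedler3 -sweedlerB; apply: eq_sweedler => x z; rewrite sweedlerB.
Qed.

Lemma bilin_sweedlerl (F : A -> A -> V) : bilin F -> forall (B : A -> A -> A) a z,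
  F (sweedler B a) z = sweedler (fun x y => F (B x y) z) a.
Proof. by move=> hF B a z; apply: bilin_suml. Qed.

Lemma bilin_sweedlerr (F : A -> A -> V) : bilin F -> forall (B : A -> A -> A) a z,
  F z (sweedler B a) = sweedler (fun x y => F z (B x y)) a.
Proof. by move=> hF B a z; apply: bilin_sumr. Qed.

Lemma mulr_sweedlerr (B : A -> A -> A) c a :
  c * sweedler B a = sweedler (fun x y => c * B x y) a.
Proof. exact: mulr_sumr. Qed.

Lemma mulr_sweedlerl (B : A -> A -> A) c a :
  sweedler B a * c = sweedler (fun x y => B x y * c) a.
Proof. exact: mulr_suml. Qed.

End Sweedler.


Section InfinitesimalHopf.
Variables (K : fieldType) (A : algType K) (Delta : A -> seq (A * A)).
Variables (eps : {scalar A}) (S : {linear A -> A}).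
Hypotheses (hD : coprod_linear Delta) (hC : coassociative Delta).
Hypotheses (hcu : counital Delta eps) (hI : infinitesimal_compat Delta).
Hypothesis hS : is_antipode Delta eps S.

Local Notation sweedler := (sweedler Delta).
Local Notation sweedler3 := (sweedler3 Delta).

Section Linearity.
Variables (V : lmodType K) (B : A -> A -> V) (hB : bilin B).

Lemma sweedlerP c x y :
  sweedler B (c *: x + y) = c *: sweedler B x + sweedler B y.
Proof.
rewrite !sweedlerE (hD c x y hB) big_cat big_map scaler_sumr.
by congr (_ + _); apply: eq_bigr => p _; rewrite bilinZl.
Qed.

Let sweedler_lin : {linear A -> V} := pack_linear sweedlerP.

Lemma sweedler_sweedler (C : A -> A -> A) a :
  sweedler B (sweedler C a) = sweedler (fun x y => sweedler B (C x y)) a.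
Proof. exact: (linear_sum sweedler_lin). Qed.

End Linearity.

Lemma linear_sweedler (V W : lmodType K) (f : {linear V -> W})
    (B : A -> A -> V) a :
  f (sweedler B a) = sweedler (fun x y => f (B x y)) a.
Proof. exact: linear_sum. Qed.

Lemma sweedler_mul (V : lmodType K) (B : A -> A -> V) a b : bilin B ->
  sweedler B (a * b) =
  sweedler (fun x y => B x (y * b)) a + sweedler (fun x y => B (a * x) y) b - B a b.
Proof.
move=> hB; rewrite !sweedlerE (hI a b hB) !big_cat !big_map big_seq1 /=.
by rewrite bilinNl // addrA.
Qed.

Lemma sweedler3_coassoc (V : lmodType K) (T : A -> A -> A -> V) a : trilin T ->
  sweedler3 T a = sweedler (fun x w => sweedler (T x) w) a.
Proof.
move=> hT; have := hC a hT; rewrite !big_flatten !big_map /=.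
under eq_bigr do rewrite big_map.
by under [in X in _ = X -> _]eq_bigr do rewrite big_map.
Qed.

Lemma sweedler_counitl a : sweedler (fun x y => eps x *: y) a = a.
Proof. exact: (hcu a).1. Qed.

Lemma sweedler_counitr a : sweedler (fun x y => eps y *: x) a = a.
Proof. exact: (hcu a).2. Qed.

Lemma sweedler_antipodel a : sweedler (fun x y => S x * y) a = eps a *: 1.
Proof. exact: (hS a).1. Qed.

Lemma sweedler_antipoder a : sweedler (fun x y => x * S y) a = eps a *: 1.
Proof. exact: (hS a).2. Qed.

Lemma counit_mul a b : eps (a * b) = eps a * eps b.
Proof.
pose B (x y : A) : K^o := eps x * eps y.
have hB : bilin B.
  by split=> c x y z; rewrite /B linearP /= ?mulrDl ?mulrDr -?mulrA // mulrCA.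
have epsl w c : sweedler (fun x y => B x (y * c)) w = eps (w * c).
  rewrite -{2}(sweedler_counitl w) mulr_sweedlerl sweedlerE linear_sum.
  by apply: eq_bigr => p _; rewrite -scalerAl linearZ.
have epsr w c : sweedler (fun x y => B (c * x) y) w = eps (c * w).
  rewrite -{2}(sweedler_counitr w) mulr_sweedlerr sweedlerE linear_sum.
  by apply: eq_bigr => p _; rewrite -scalerAr linearZ /= mulrC.
have epsB w : sweedler B w = eps w.
  by rewrite -{2}[w]mulr1 -epsl; apply: eq_sweedler => x y; rewrite mulr1.
have := sweedler_mul a b hB; rewrite epsl epsr epsB => /eqP.
by rewrite eq_sym subr_eq (inj_eq (addrI _)) => /eqP.
Qed.

Lemma trilin_antipodel (V : lmodType K) (F : A -> A -> V) :
  bilin F -> trilin (fun x y z => F (S x * y) z).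
Proof.
case=> Fl Fr; split; [|split] => c x y z w.
- by rewrite linearP /= mulrDl -scalerAl Fl.
- by rewrite mulrDr -scalerAr Fl.
- by rewrite Fr.
Qed.

Lemma trilin_antipoder (V : lmodType K) (F : A -> A -> V) :
  bilin F -> trilin (fun x y z => F x (y * S z)).
Proof.
case=> Fl Fr; split; [|split] => c x y z w.
- by rewrite Fl.
- by rewrite mulrDl -scalerAl Fr.
- by rewrite linearP /= mulrDr -scalerAr Fr.
Qed.

Lemma sweedler3_antipodel (V : lmodType K) (F : A -> A -> V) a :
  bilin F -> sweedler3 (fun x y z => F (S x * y) z) a = F 1 a.
Proof.
move=> hF; rewrite -{2}(sweedler_counitl a) (bilin_sweedlerr Delta hF).
apply: eq_sweedler => x z.
by rewrite (bilinZr hF) -(bilinZl hF) -sweedler_antipodel (bilin_sweedlerl Delta hF).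
Qed.

Lemma sweedler3_antipoder (V : lmodType K) (F : A -> A -> V) a :
  bilin F -> sweedler3 (fun x y z => F x (y * S z)) a = F a 1.
Proof.
move=> hF; rewrite sweedler3_coassoc; last exact: trilin_antipoder.
rewrite -{2}(sweedler_counitr a) (bilin_sweedlerl Delta hF).
apply: eq_sweedler => x w.
by rewrite (bilinZl hF) -(bilinZr hF) -sweedler_antipoder (bilin_sweedlerr Delta hF).
Qed.

Lemma bilin_sweedler_antipode (V : lmodType K) (T : A -> A -> A -> V) :
  trilin T -> bilin (fun w x => sweedler (T w) (S x)).
Proof.
move=> hT; split=> c x y z.
- rewrite scaler_sweedler -sweedlerD; apply: eq_sweedler => u v.
  by case: hT => T1 _; rewrite T1.
- by rewrite linearP (sweedlerP (trilin_bilin z hT)).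
Qed.

Lemma sweedler_antipode_mulr a b :
  sweedler (fun x y => x * S (y * b)) a = (eps a * eps b) *: 1 - eps b *: a + a * S b.
Proof.
have := sweedler_mul a b (bilin_linear bilin_mul idfun S).
rewrite /= sweedler_antipoder counit_mul.
have -> : sweedler (fun x y => a * x * S y) b = eps b *: a.
  rewrite -[in RHS](mulr1 a) scalerAr -sweedler_antipoder mulr_sweedlerr.
  by apply: eq_sweedler => x y; rewrite mulrA.
by move=> ->; rewrite addrAC subrK addrK.
Qed.

Lemma antipode_mul a b :
  S (a * b) = eps a *: S b + eps b *: S a - (eps a * eps b) *: 1.
Proof.
have hF := bilin_mulr (bilin_linear bilin_mul idfun S) b.
have := sweedler3_antipodel a hF; rewrite /= mul1r => <-.
rewrite sweedler3_coassoc; last exact: trilin_antipodel hF.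
transitivity (sweedler (fun x w => S x * ((eps w * eps b) *: 1 - eps b *: w + w * S b)) a).
  apply: eq_sweedler => x w; rewrite -sweedler_antipode_mulr mulr_sweedlerr.
  by apply: eq_sweedler => y z; rewrite mulrA.
under eq_sweedler => x w do rewrite mulrDr mulrBr -!scalerAr mulr1 mulrA.
rewrite sweedlerD sweedlerB.
have -> : sweedler (fun x w => (eps w * eps b) *: S x) a = eps b *: S a.
  rewrite -{2}(sweedler_counitr a) linear_sweedler scaler_sweedler.
  by apply: eq_sweedler => x w; rewrite linearZ scalerA mulrC.
have -> : sweedler (fun x w => eps b *: (S x * w)) a = (eps a * eps b) *: 1.
  by rewrite -scaler_sweedler sweedler_antipodel scalerA mulrC.
have -> : sweedler (fun x w => S x * w * S b) a = eps a *: S b.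
  by rewrite -mulr_sweedlerl sweedler_antipodel -scalerAl mul1r.
by rewrite addrC addrA.
Qed.

Lemma sweedler_mul3 (V : lmodType K) (B : A -> A -> V) x y z : bilin B ->
  sweedler B (x * y * z) =
  sweedler (fun u v => B u (v * (y * z))) x + sweedler (fun u v => B (x * u) (v * z)) y
  + sweedler (fun u v => B (x * y * u) v) z - B x (y * z) - B (x * y) z.
Proof.
move=> hB; rewrite sweedler_mul // sweedler_mul; last exact: bilin_mulr.
under eq_sweedler => u v do rewrite -mulrA.
by congr (_ - _); rewrite addrAC.
Qed.

Lemma sweedler_antipode (V : lmodType K) (B : A -> A -> V) a : bilin B ->
  sweedler B (S a) = B (S a) 1 + B 1 (S a) - B 1 (eps a *: 1).
Proof.
move=> hB; set X := sweedler B (S a).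
have Sa : sweedler3 (fun x y z => S x * y * S z) a = S a.
  exact: etrans (sweedler3_antipodel a (bilin_linear bilin_mul idfun S)) (mul1r _).
have T1 : sweedler3 (fun x y z => sweedler (fun u v => B u (v * (y * S z))) (S x)) a = X.
  have := sweedler3_antipoder a (bilin_swap (bilin_sweedler_antipode (trilin_mulr hB))).
  by move=> /= ->; apply: eq_sweedler => u v; rewrite mulr1.
have T2 : sweedler3 (fun x y z => sweedler (fun u v => B (S x * u) (v * S z)) y) a
          = B 1 (eps a *: 1).
  rewrite sweedler3E -(sweedler_antipoder a) (bilin_sweedlerr Delta hB).
  apply: eq_sweedler => w z; have hF := bilin_mulr hB (S z).
  transitivity (sweedler3 (fun x u v => B (S x * u) (v * S z)) w).
    by rewrite sweedler3_coassoc //; apply: trilin_antipodel hF.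
  exact: sweedler3_antipodel w hF.
have T3 : sweedler3 (fun x y z => sweedler (fun u v => B (S x * y * u) v) (S z)) a = X.
  have := sweedler3_antipodel a (bilin_sweedler_antipode (trilin_mull hB)).
  by move=> /= ->; apply: eq_sweedler => u v; rewrite mul1r.
have T4 : sweedler3 (fun x y z => B (S x) (y * S z)) a = B (S a) 1.
  exact: sweedler3_antipoder a (bilin_linear hB S idfun).
have T5 : sweedler3 (fun x y z => B (S x * y) (S z)) a = B 1 (S a).
  exact: sweedler3_antipodel a (bilin_linear hB idfun S).
have key : X = X + B 1 (eps a *: 1) + X - B (S a) 1 - B 1 (S a).
  rewrite {1}/X -{1}Sa sweedler3E (sweedler_sweedler hB).
  under eq_sweedler => x z do rewrite (sweedler_sweedler hB).
  rewrite -[sweedler _ _]/(sweedler3 (fun x y z => sweedler B (S x * y * S z)) a).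
  rewrite (eq_sweedler3 _ _ (fun x y z => sweedler_mul3 (S x) y (S z) hB)).
  by rewrite !sweedler3B !sweedler3D T1 T2 T3 T4 T5.
move/eqP: key; rewrite eq_sym !subr_eq -!addrA (inj_eq (addrI X)) => /eqP key.
by rewrite -[X](addrK (B 1 (eps a *: 1))) [X + _]addrC key [B 1 (S a) + _]addrC -addrA.
Qed.

End InfinitesimalHopf.

Theorem lemma4 (K : fieldType) (A : algType K)
  (Delta : A -> seq (A * A)) (eps : {scalar A}) (S : {linear A -> A}) :
  inf_bialgebra Delta eps -> is_antipode Delta eps S ->
  ((forall a b : A,
      S (a * b) = eps a *: S b + eps b *: S a - (eps a * eps b) *: 1) /\
   (forall a b : A, eps a = 0 -> eps b = 0 -> S (a * b) = 0)) /\
  ((forall a : A,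
      teq2 (Delta (S a)) [:: (S a, 1); (1, S a); (- (eps a) *: 1, 1)]) /\
   (forall a : A, eps a = 0 -> primitive Delta (S a))).
Proof.
case=> hD hC hcu hI hS.
have S_mul := antipode_mul hC hcu hI hS.
have Delta_S := sweedler_antipode hD hC hcu hI hS.
split; split.
- exact: S_mul.
- by move=> a b ea eb; rewrite S_mul ea eb mul0r !scale0r addr0 subr0.
- move=> a V B hB; rewrite -sweedlerE (Delta_S _ _ a hB) !big_cons big_nil /= addr0.
  by rewrite (bilinZl hB) (bilinZr hB) scaleNr addrA.
- move=> a ea V B hB; rewrite -sweedlerE (Delta_S _ _ a hB) !big_cons big_nil /= addr0.
  by rewrite (bilinZr hB) ea scale0r subr0.
Qed.
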